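(* $\mathsf{AP}(R_1,R_2)=\mathsf{AP}(R_1,R_3)=\mathsf{C}$.
   Context: Tuples in $\{0,1\}^4$ are written as strings $abcd$. The relations $R_1,\dots,R_5\subseteq\{0,1\}^4$ are $R_1=\{0000,1000,0100,1100,1010,0110,1001,0101,0011,1011,0111,1111\}$, $R_2=\{0000,1000,0100,1100,1010,0101,0011,1111\}$, $R_3=\{0000,1100,1010,0101,0011,1011,0111,1111\}$, $R_4=\{0000,1100,1010,0101,0011,1111\}$, $R_5=\{0000,1100,1010,0110,1001,0101,0011,1111\}$. For $R,S\subseteq\{0,1\}^4$, a Boolean function $f\colon\{0,1\}^n\to\{0,1\}$ is analogy-preserving relative to $(R,S)$ if for all $\mathbf{a},\mathbf{b},\mathbf{c},\mathbf{d}\in\{0,1\}^n$ with $(a_i,b_i,c_i,d_i)\in R$ for every $i$ and such that $(f(\mathbf{a}),f(\mathbf{b}),f(\mathbf{c}),x)\in S$ for some $x\in\{0,1\}$, we have $(f(\mathbf{a}),f(\mathbf{b}),f(\mathbf{c}),f(\mathbf{d}))\in S$; $\mathsf{AP}(R,S)$ is the set of all such functions of all arities. $\mathsf{C}$ is the set of all constant Boolean functions (of all arities). *)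

From mathcomp Require Import all_boot.
Set Implicit Arguments. Unset Strict Implicit. Unset Printing Implicit Defensive.

Definition bits4 := (bool * bool * bool * bool)%type.
Definition q (a b c d : nat) : bits4 := (a == 1, b == 1, c == 1, d == 1).

Definition R1 : seq bits4 :=
  [:: q 0 0 0 0; q 1 0 0 0; q 0 1 0 0; q 1 1 0 0; q 1 0 1 0; q 0 1 1 0;
      q 1 0 0 1; q 0 1 0 1; q 0 0 1 1; q 1 0 1 1; q 0 1 1 1; q 1 1 1 1].
Definition R2 : seq bits4 :=
  [:: q 0 0 0 0; q 1 0 0 0; q 0 1 0 0; q 1 1 0 0; q 1 0 1 0; q 0 1 0 1;
      q 0 0 1 1; q 1 1 1 1].
Definition R3 : seq bits4 :=
  [:: q 0 0 0 0; q 1 1 0 0; q 1 0 1 0; q 0 1 0 1; q 0 0 1 1; q 1 0 1 1;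
      q 0 1 1 1; q 1 1 1 1].
Definition R4 : seq bits4 :=
  [:: q 0 0 0 0; q 1 1 0 0; q 1 0 1 0; q 0 1 0 1; q 0 0 1 1; q 1 1 1 1].
Definition R5 : seq bits4 :=
  [:: q 0 0 0 0; q 1 1 0 0; q 1 0 1 0; q 0 1 1 0; q 1 0 0 1; q 0 1 0 1;
      q 0 0 1 1; q 1 1 1 1].

Definition boolfun (n : nat) := ('I_n -> bool) -> bool.

Definition AP (R S : seq bits4) (n : nat) (f : boolfun n) : Prop :=
  forall a b c d : 'I_n -> bool,
    (forall i : 'I_n, (a i, b i, c i, d i) \in R) ->
    (exists x : bool, (f a, f b, f c, x) \in S) ->
    (f a, f b, f c, f d) \in S.

(* f belongs to C: f is constant *)
Definition is_const (n : nat) (f : boolfun n) : Prop :=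
  exists v : bool, forall x : 'I_n -> bool, f x = v.

(** If [f] took both values, pick [u] with [f u = b] and [v] with [f v = ~~ b].
    Coordinatewise [(u i, v i, v i, u i)] is of the form [xyyx], which lies in
    [R1]; so analogy preservation forces [(b, ~~ b, ~~ b, b)] into [S] as soon
    as some completion of [(b, ~~ b, ~~ b)] is in [S]. Both [R2] (with [b = true])
    and [R3] (with [b = false]) rule this out, while any [S] containing
    [0000] and [1111] is preserved by constant functions. *)

From mathcomp Require Import all_boot.

Lemma mem_R1_xyyx (x y : bool) : (x, y, y, x) \in R1.
Proof. by case: x; case: y. Qed.

Lemma const_AP (R S : seq bits4) (n : nat) (f : boolfun n) :
  (forall v, (v, v, v, v) \in S) -> is_const f -> AP R S f.
Proof. by move=> Sdiag [v fv] a b c d _ _; rewrite !fv. Qed.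

Section AP_R1.

Variables (S : seq bits4) (b : bool).
Hypothesis notS_xyyx : (b, ~~ b, ~~ b, b) \notin S.
Hypothesis S_completes : exists x, (b, ~~ b, ~~ b, x) \in S.

Lemma AP_R1_value_stable {n : nat} {f : boolfun n} (u v : 'I_n -> bool) :
  AP R1 S f -> f u = b -> f v = b.
Proof.
move=> fAP fu; apply: contraNeq notS_xyyx => /negPf fv.
have {}fv : f v = ~~ b by move: fv; case: (f v); case: b.
have := fAP u v v u (fun i => mem_R1_xyyx (u i) (v i)).
by rewrite fu fv; apply.
Qed.

Lemma AP_R1_const (n : nat) (f : boolfun n) : AP R1 S f -> is_const f.
Proof.
move=> fAP; pose u0 : 'I_n -> bool := fun _ => false.
exists (f u0) => x.
have [fu0 | fu0] := eqVneq (f u0) b.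
  by rewrite fu0 (AP_R1_value_stable u0 x fAP fu0).
have [fx | fx] := eqVneq (f x) b.
  by rewrite (AP_R1_value_stable x u0 fAP fx) eqxx in fu0.
by move: fx fu0; case: (f x); case: (f u0); case: b.
Qed.

End AP_R1.

Lemma AP_R1_iff_const (S : seq bits4) (b : bool) (n : nat) (f : boolfun n) :
  (b, ~~ b, ~~ b, b) \notin S -> (exists x, (b, ~~ b, ~~ b, x) \in S) ->
  (forall v, (v, v, v, v) \in S) ->
  (AP R1 S f <-> is_const f).
Proof.
move=> notS Scompl Sdiag; split; first exact: (@AP_R1_const S b notS Scompl n f).
exact: const_AP.
Qed.

Theorem mainTheorem12 :
  forall (n : nat) (f : boolfun n),
    (AP R1 R2 f <-> is_const f) /\ (AP R1 R3 f <-> is_const f).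
Proof.
move=> n f; split.
- by apply: (@AP_R1_iff_const _ true) => //; [exists false | case].
- by apply: (@AP_R1_iff_const _ false) => //; [exists true | case].
Qed.
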